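(* (a) Let $\mathbb{X}$ be a $0$-dimensional Polish space and $(C^\varepsilon_i)_{(\varepsilon,i)\in2\times\omega}$ a family of pairwise disjoint clopen subsets of $\mathbb{X}$; put $R:=\bigcup_{i\in\omega}C^0_i\times C^1_i$ and $Z:=\mathbb{X}\setminus\bigcup_{(\varepsilon,i)}C^\varepsilon_i$. Assume $Z\neq\emptyset$ and that no clopen set $D\subseteq\mathbb{X}$ meeting $Z$ satisfies $R\cap D^2=\emptyset$. Then there is no continuous $c:\mathbb{X}\to\omega$ with $c(x)\neq c(y)$ for all $(x,y)\in R$. (b) There exists a family of pairwise disjoint clopen subsets of $2^\omega$ indexed by $2\times\omega$ satisfying the hypotheses of (a). *)

From HB Require Import structures.
From mathcomp Require Import all_boot all_algebra all_classical all_reals all_analysis.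
Set Implicit Arguments. Unset Strict Implicit. Unset Printing Implicit Defensive.
Local Open Scope classical_set_scope.

(* 0-dimensional in the usual (descriptive set theory) sense:
   the clopen sets form a base of the topology. *)
Definition clopen_base (T : topologicalType) : Prop :=
  forall (x : T) (U : set T), nbhs x U -> exists V : set T, [/\ clopen V, V x & V `<=` U].

(* Polish space presented by a compatible complete metric:
   a complete (pseudo)metric space which is Hausdorff (so a metric)
   and second countable (equivalently separable). *)
Definition polish_metric (R : realType) (T : completePseudoMetricType R) : Prop :=
  hausdorff_space T /\ @second_countable T.

(* The relation R = U_i C^0_i x C^1_i  (0 = false, 1 = true). *)
Definition relR (T : Type) (C : bool -> nat -> set T) : set (T * T) :=
  [set p | exists i, C false i p.1 /\ C true i p.2].

Definition setZ (T : Type) (C : bool -> nat -> set T) : set T :=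
  [set x | forall e i, ~ C e i x].

Definition good_family (T : topologicalType) (C : bool -> nat -> set T) : Prop :=
  [/\ (forall e i, clopen (C e i)),
      (forall e i e' i', (e, i) <> (e', i') -> C e i `&` C e' i' = set0),
      setZ C !=set0 &
      ~ (exists D : set T, [/\ clopen D, D `&` setZ C !=set0 &
                               relR C `&` (D `*` D) = set0])].

From HB Require Import structures.
From mathcomp Require Import all_boot all_algebra all_classical all_reals all_analysis.
Local Open Scope classical_set_scope.

(* (a) The fibre D of a continuous colouring c : X -> nat through a point of Z
   is clopen, meets Z, and no pair of R lies in D^2 because c separates R.
   (b) In Cantor space take C^e_i = the sequences whose first 1 is at
   position i and whose (i+1)-th digit is e; then Z is the zero sequence,
   and every clopen neighbourhood of zero contains, for large k, both the
   indicator of {k} (in C^0_k) and the indicator of {k, k+1} (in C^1_k). *)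

Lemma clopen_fiber (T : topologicalType) (c : T -> nat) (n : nat) :
  continuous c -> clopen (c @^-1` [set n]).
Proof.
move=> cc; apply: preimage_clopen => //.
by split; [exact: discrete_open | exact: discrete_closed].
Qed.

Lemma good_family_no_continuous_coloring (T : topologicalType)
    (C : bool -> nat -> set T) :
  good_family C ->
  ~ exists c : T -> nat, continuous c /\ forall x y, relR C (x, y) -> c x <> c y.
Proof.
move=> [_ _ [z Zz] noD] [c [cc cR]].
apply: noD; exists (c @^-1` [set c z]); split.
- exact: clopen_fiber.
- by exists z.
- apply/seteqP; split => [[x y] [/= Rxy [Dx Dy]]|//].
  by apply: (cR _ _ Rxy); rewrite Dx Dy.
Qed.

Lemma clopen_coord (j : nat) (b : bool) : clopen [set x : cantor_space | x j = b].
Proof.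
apply: (@preimage_clopen _ _ (fun x : cantor_space => x j) [set b]).
  by split; [exact: discrete_open | exact: discrete_closed].
exact: (@proj_continuous nat (fun _ => bool) j).
Qed.

Lemma clopen_zero_prefix (i : nat) :
  clopen [set x : cantor_space | forall j, (j < i)%N -> x j = false].
Proof.
elim: i => [|i IH].
  have -> : [set x : cantor_space | forall j, (j < 0)%N -> x j = false] = setT.
    by apply/seteqP; split => // x _ j.
  exact: clopenT.
have -> : [set x : cantor_space | forall j, (j < i.+1)%N -> x j = false] =
    [set x | forall j, (j < i)%N -> x j = false] `&` [set x | x i = false].
  apply/seteqP; split => x /=.
    by move=> xi0; split => [j ji|]; apply: xi0 => //; apply: ltnW.
  move=> [xi0 xi] j; rewrite ltnS leq_eqVlt => /orP[/eqP->//|]; exact: xi0.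
by apply: clopenI; [exact: IH | exact: clopen_coord].
Qed.

Definition first_one (i : nat) : set cantor_space :=
  [set x | x i = true /\ forall j, (j < i)%N -> x j = false].

Lemma first_one_uniq {i i' : nat} {x : cantor_space} :
  first_one i x -> first_one i' x -> i = i'.
Proof.
move=> [xi xlt] [xi' xlt']; case: (ltngtP i i') => // ii'.
- by move: (xlt' _ ii'); rewrite xi.
- by move: (xlt _ ii'); rewrite xi'.
Qed.

Definition cantor_family (e : bool) (i : nat) : set cantor_space :=
  first_one i `&` [set x | x i.+1 = e].

Lemma clopen_cantor_family e i : clopen (cantor_family e i).
Proof.
have -> : cantor_family e i = [set x | x i = true] `&`
    [set x | forall j, (j < i)%N -> x j = false] `&` [set x | x i.+1 = e].
  by apply/seteqP; split => x /=; [case=> -[]|case=> -[]].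
by apply: clopenI; [apply: clopenI|];
  [exact: clopen_coord | exact: clopen_zero_prefix | exact: clopen_coord].
Qed.

Lemma cantor_family_disjoint e i e' i' :
  (e, i) <> (e', i') -> cantor_family e i `&` cantor_family e' i' = set0.
Proof.
move=> neq; apply/seteqP; split => // x [[fi xe] [fi' xe']].
have ii' := first_one_uniq fi fi'; subst i'.
by apply: neq; rewrite -xe -xe'.
Qed.

Definition zero_seq : cantor_space := fun _ => false.

Lemma setZ_cantor_family x : setZ cantor_family x -> x = zero_seq.
Proof.
move=> Zx; apply: functional_extensionality_dep => n; apply/negbTE/negP => xn.
have [i xi imin] := ex_minnP (ex_intro (fun k => x k) n xn).
apply: (Zx (x i.+1) i); split => //; split => // j ji.
by apply/negbTE/negP => /imin; rewrite leqNgt ji.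
Qed.

Lemma cvg_zero_seq (a : nat -> cantor_space) :
  (forall t, \forall k \near \oo, a k t = false) -> a @ \oo --> zero_seq.
Proof.
move=> a_ev; apply: (@pointwise_cvgP nat bool (a @ \oo) zero_seq _).2 => t.
move=> U /= /principal_filterP Uf.
by apply: filterS (a_ev t) => k /= ->.
Qed.

Definition delta1 (k : nat) : cantor_space := fun j => j == k.

Definition delta2 (k : nat) : cantor_space := fun j => (j == k) || (j == k.+1).

Lemma cvg_delta1 : delta1 @ \oo --> zero_seq.
Proof.
apply: cvg_zero_seq => t; exists t.+1 => // k /= tk.
by apply/negbTE; rewrite neq_ltn tk.
Qed.

Lemma cvg_delta2 : delta2 @ \oo --> zero_seq.
Proof.
apply: cvg_zero_seq => t; exists t.+1 => // k /= tk.
by apply/norP; split; rewrite neq_ltn ?tk // ltnS ltnW.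
Qed.

Lemma delta12_relR k : relR cantor_family (delta1 k, delta2 k).
Proof.
exists k; split; split=> /=.
- split=> [|j jk]; rewrite /delta1 ?eqxx //.
  by apply/negbTE; rewrite neq_ltn jk.
- by rewrite /delta1; apply/negbTE; rewrite neq_ltn ltnSn orbT.
- split=> [|j jk]; rewrite /delta2 ?eqxx //.
  by apply/norP; split; rewrite neq_ltn ?jk // (ltn_trans jk).
- by rewrite /delta2 eqxx orbT.
Qed.

Lemma good_cantor_family : good_family cantor_family.
Proof.
split.
- exact: clopen_cantor_family.
- exact: cantor_family_disjoint.
- by exists zero_seq => e i [[]].
move=> [D [[oD _] [z [Dz /setZ_cantor_family zE]] RD]].
rewrite zE in Dz.
have nD : nbhs zero_seq D by apply: open_nbhs_nbhs.
have [N _ D1] := cvg_delta1 _ nD.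
have [M _ D2] := cvg_delta2 _ nD.
pose k := maxn N M.
move/seteqP: RD => [+ _] => /(_ (delta1 k, delta2 k)); apply.
split; first exact: delta12_relR.
by split; [apply: D1; rewrite /= leq_maxl | apply: D2; rewrite /= leq_maxr].
Qed.

Theorem lemma3p2 :
  (forall (R : realType) (T : completePseudoMetricType R),
      polish_metric T -> clopen_base T ->
      forall C : bool -> nat -> set T, good_family C ->
      ~ (exists c : T -> nat, continuous c /\
           (forall x y, relR C (x, y) -> c x <> c y)))
  /\ (exists C : bool -> nat -> set cantor_space, good_family C).
Proof.
split.
- by move=> R T _ _ C; exact: good_family_no_continuous_coloring.
- by exists cantor_family; exact: good_cantor_family.
Qed.
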